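(* Let $\iota:\mathbf{CFam}_S\to\mathbf{C}$ be an $S$-sorted CCC and $D$ a cartesian closed natural system on $\mathbf{C}$. Then there is an isomorphism of abelian groups \[ \mathrm{Der}^{\mathbf{CCC}_S}(\mathbf{C};D)\cong\Big\{d\in\prod_{f\in\mathrm{Mor}(\mathbf{C})}D_f\ \Big|\ d(f\circ g)=f_*d(g)+g^*d(f)\ \text{for composable } f,g,\ \ d(\iota(\pi_i))=0,\ \ d(\iota(\mathrm{ev}^Y_Z))=0\Big\}, \] where $\pi_i$ ranges over the projections and $\mathrm{ev}^Y_Z$ over the evaluation maps of $\mathbf{CFam}_S$.
   Context: $\mathsf{BiMag}_S$ is the set of formal expressions generated from the elements of $S$ and $1$ by $X\times Y$ and $Y^X$; $\mathbf{CFam}_S$ is the free cartesian closed category with object set $\mathsf{BiMag}_S$ and no generating morphisms (generated by identities, $!_X$, projections $\pi_i$, evaluations $\mathrm{ev}^Y_Z:Z^Y\times Y\to Z$, composition, pairing, currying). An $S$-sorted CCC is a CCC $\mathbf{C}$ with $\mathrm{Ob}(\mathbf{C})=\mathsf{BiMag}_S$ and a cartesian closed identity-on-objects functor $\iota:\mathbf{CFam}_S\to\mathbf{C}$; $\mathbf{CCC}_S$ has as morphisms the functors $F$ with $F\circ\iota=\iota'$. A natural system on $\mathbf{C}$ is a functor $D$ from the category of factorizations of $\mathbf{C}$ (objects: morphisms $f$; morphisms $f\to g$: pairs $(a,b)$ with $bfa=g$) to $\mathbf{Ab}$; $D_f=D(f)$, $a_*=D(1,a):D_f\to D_{af}$,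 $a^*=D(a,1):D_g\to D_{ga}$. $D$ is cartesian if $D_f\to\prod_kD_{\pi_kf}$, $\xi\mapsto(\pi_{k*}\xi)$, is an isomorphism for all $f:X\to X_1\times\dots\times X_n$; it is cartesian closed if moreover, for each $f:X\times Y\to Z$, the map $D_{\lambda f}\to D_f$, $\xi\mapsto\mathrm{ev}^Y_{Z*}\phi_{\lambda f}(\xi,0)$ is an isomorphism, where $\phi_g:D_g\times D_{\pi_2}\to D_{g\times 1_Y}$ is $\pi_1^*\times 1$ followed by the inverse of the cartesian isomorphism $D_{g\times1_Y}\to D_{g\pi_1}\times D_{\pi_2}$. The trivial extension $D\rtimes\mathbf{C}$ has $\mathrm{Hom}(X,Y)=\coprod_{f:X\to Y}D_f$ with composition $\xi\circ\eta=f_*\eta+g^*\xi$ ($\xi\in D_f,\eta\in D_g$); for cartesian closed $D$ it is an $S$-sorted CCC with $\tilde\iota$ sending identities, projections and evaluations to the zero elements over their images under $\iota$, and $p:D\rtimes\mathbf{C}\to\mathbf{C}$ is the projection. $\mathrm{Der}^{\mathbf{CCC}_S}(\mathbf{C};D)$ is the abelian group of morphisms $s:\mathbf{C}\to D\rtimes\mathbf{C}$ in $\mathbf{CCC}_S$ with $ps=\mathrm{id}_{\mathbf{C}}$. *)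

From HB Require Import structures.
From mathcomp Require Import all_boot all_algebra.
From Stdlib Require Import ClassicalEpsilon.
Set Implicit Arguments. Unset Strict Implicit. Unset Printing Implicit Defensive.
Import GRing.Theory.
Local Open Scope ring_scope.

(* BExp Z Y stands for Z^Y.                                            *)
Inductive bimag (S : Type) : Type :=
| BBase of S
| BOne
| BProd of bimag S & bimag S
| BExp of bimag S & bimag S.
Arguments BOne {S}.

(* Morphism terms of CFam_S (the free CCC on BiMag_S with no generating *)
(* morphisms is the quotient of these terms by the CCC equations).      *)
Inductive cterm (S : Type) : bimag S -> bimag S -> Type :=
| tid X : cterm X X
| tcomp X Y Z : cterm Y Z -> cterm X Y -> cterm X Z
| tbang X : cterm X BOne
| tpr1 X Y : cterm (BProd X Y) X
| tpr2 X Y : cterm (BProd X Y) Y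
| tpair X Y Z : cterm X Y -> cterm X Z -> cterm X (BProd Y Z)
| tev Y Z : cterm (BProd (BExp Z Y) Y) Z
| tcurry X Y Z : cterm (BProd X Y) Z -> cterm X (BExp Z Y).

(* An S-sorted CCC: a category with object set BiMag_S in which the     *)
(* formal objects 1, X x Y, Z^Y carry the structure of terminal object, *)
(* binary products and exponentials, with distinguished morphisms       *)
(* iota(!), iota(pi_i), iota(ev) (and pairing / currying).              *)
Record sccc (S : Type) := SCCC {
  mor : bimag S -> bimag S -> Type;
  idm : forall X, mor X X;
  comp : forall X Y Z, mor Y Z -> mor X Y -> mor X Z;
  comp_idl : forall X Y (f : mor X Y), comp (idm Y) f = f;
  comp_idr : forall X Y (f : mor X Y), comp f (idm X) = f;
  compA : forall X Y Z W (h : mor Z W) (g : mor Y Z) (f : mor X Y),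
      comp h (comp g f) = comp (comp h g) f;
  bang : forall X, mor X BOne;
  bang_uniq : forall X (f : mor X BOne), f = bang X;
  pr1 : forall X Y, mor (BProd X Y) X;
  pr2 : forall X Y, mor (BProd X Y) Y;
  pair : forall X Y Z, mor X Y -> mor X Z -> mor X (BProd Y Z);
  pr1_pair : forall X Y Z (f : mor X Y) (g : mor X Z),
      comp (pr1 Y Z) (pair f g) = f;
  pr2_pair : forall X Y Z (f : mor X Y) (g : mor X Z),
      comp (pr2 Y Z) (pair f g) = g;
  pair_eta : forall X Y Z (h : mor X (BProd Y Z)),
      pair (comp (pr1 Y Z) h) (comp (pr2 Y Z) h) = h;
  ev : forall Y Z, mor (BProd (BExp Z Y) Y) Z;
  curry : forall X Y Z, mor (BProd X Y) Z -> mor X (BExp Z Y);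
  ev_curry : forall X Y Z (f : mor (BProd X Y) Z),
      comp (ev Y Z) (pair (comp (curry f) (pr1 X Y)) (pr2 X Y)) = f;
  curry_eta : forall X Y Z (g : mor X (BExp Z Y)),
      curry (comp (ev Y Z) (pair (comp g (pr1 X Y)) (pr2 X Y))) = g
}.
Arguments idm {S} s X.
Arguments bang {S} s X.
Arguments pr1 {S} s X Y.
Arguments pr2 {S} s X Y.
Arguments ev {S} s Y Z.

Fixpoint interp (S : Type) (C : sccc S) (X Y : bimag S) (t : cterm X Y)
  : mor C X Y :=
  match t in cterm X Y return mor C X Y with
  | tid X => idm C X
  | tcomp _ _ _ g f => comp (interp C g) (interp C f)
  | tbang X => bang C X
  | tpr1 X Y => pr1 C X Y
  | tpr2 X Y => pr2 C X Y
  | tpair _ _ _ f g => pair (interp C f) (interp C g)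
  | tev Y Z => ev C Y Z
  | tcurry _ _ _ f => curry (interp C f)
  end.

(* Natural systems: functors from the category of factorizations of C  *)
(* to Ab.  A morphism f -> g of the factorization category is a pair    *)
(* (a, b) with b f a = g; nsmap e is D(a,b).                            *)
Record natsys (S : Type) (C : sccc S) := NatSys {
  ns : forall X Y, mor C X Y -> zmodType;
  nsmap : forall X Y X' Y' (f : mor C X Y) (g : mor C X' Y')
            (a : mor C X' X) (b : mor C Y Y'),
      comp b (comp f a) = g -> ns f -> ns g;
  nsmapB : forall X Y X' Y' (f : mor C X Y) (g : mor C X' Y')
            (a : mor C X' X) (b : mor C Y Y') (e : comp b (comp f a) = g)
            (x y : ns f),
      nsmap e (x - y) = nsmap e x - nsmap e y;
  nsmap1 : forall X Y (f : mor C X Y)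
            (e : comp (idm C Y) (comp f (idm C X)) = f) (x : ns f),
      nsmap e x = x;
  nsmapM : forall X Y X' Y' X'' Y'' (f : mor C X Y) (g : mor C X' Y')
            (h : mor C X'' Y'')
            (a : mor C X' X) (b : mor C Y Y') (a' : mor C X'' X')
            (b' : mor C Y' Y'')
            (e1 : comp b (comp f a) = g) (e2 : comp b' (comp g a') = h)
            (e3 : comp (comp b' b) (comp f (comp a a')) = h) (x : ns f),
      nsmap e2 (nsmap e1 x) = nsmap e3 x
}.
Arguments ns {S C} n {X Y} f.
Arguments nsmap {S C} n {X Y X' Y' f g a b} e.

Section NatSysOps.
Variables (S : Type) (C : sccc S) (D : natsys C).

Lemma push_eq X Y Y' (f : mor C X Y) (b : mor C Y Y') :
  comp b (comp f (idm C X)) = comp b f.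
Proof. by rewrite comp_idr. Qed.

Lemma pull_eq X' X Y (g : mor C X Y) (a : mor C X' X) :
  comp (idm C Y) (comp g a) = comp g a.
Proof. by rewrite comp_idl. Qed.

Lemma tr_eq X Y (f g : mor C X Y) : f = g ->
  comp (idm C Y) (comp f (idm C X)) = g.
Proof. by move=> <-; rewrite comp_idl comp_idr. Qed.

Definition pushf X Y Y' (b : mor C Y Y') (f : mor C X Y) : ns D f -> ns D (comp b f) :=
  nsmap D (push_eq f b).
Definition pullf X' X Y (a : mor C X' X) (g : mor C X Y) : ns D g -> ns D (comp g a) :=
  nsmap D (pull_eq g a).
Definition tr X Y (f g : mor C X Y) (e : f = g) : ns D f -> ns D g :=
  nsmap D (tr_eq e).

Definition cartmap X Y Z (f : mor C X (BProd Y Z)) (x : ns D f)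
  : (ns D (comp (pr1 C Y Z) f) * ns D (comp (pr2 C Y Z) f))%type :=
  (pushf (pr1 C Y Z) x, pushf (pr2 C Y Z) x).

End NatSysOps.
Arguments pushf {S C} D {X Y Y'} b {f}.
Arguments pullf {S C} D {X' X Y} a {g}.
Arguments tr {S C} D {X Y f g} e.
Arguments cartmap {S C} D {X Y Z} f.

Definition inv_bij (A B : Type) (f : A -> B) (H : bijective f) : B -> A :=
  proj1_sig (constructive_indefinite_description
    (fun g => cancel f g /\ cancel g f)
    (let: Bijective g h1 h2 := H in ex_intro _ g (conj h1 h2))).

Record cartnatsys (S : Type) (C : sccc S) := CartNatSys {
  cnat :> natsys C;
  cart0 : forall X (f : mor C X BOne), bijective (fun _ : ns cnat f => tt);
  cart2 : forall X Y Z (f : mor C X (BProd Y Z)), bijective (cartmap cnat f)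
}.

Section CartOps.
Variables (S : Type) (C : sccc S) (D : cartnatsys C).

Definition cartinv X Y Z (f : mor C X (BProd Y Z)) :
  (ns D (comp (pr1 C Y Z) f) * ns D (comp (pr2 C Y Z) f))%type -> ns D f :=
  inv_bij (cart2 D f).
Arguments cartinv {X Y Z} f.

Definition times1 X Y W (g : mor C X W) : mor C (BProd X Y) (BProd W Y) :=
  pair (comp g (pr1 C X Y)) (pr2 C X Y).

Definition phi X Y W (g : mor C X W) (x : ns D g) (y : ns D (pr2 C X Y))
  : ns D (times1 Y g) :=
  cartinv (times1 Y g)
    (tr D (esym (pr1_pair (comp g (pr1 C X Y)) (pr2 C X Y))) (pullf D (pr1 C X Y) x),
     tr D (esym (pr2_pair (comp g (pr1 C X Y)) (pr2 C X Y))) y).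

Definition lammap X Y Z (f : mor C (BProd X Y) Z) (x : ns D (curry f)) : ns D f :=
  tr D (ev_curry f) (pushf D (ev C Y Z) (@phi X Y (BExp Z Y) (curry f) x 0)).

End CartOps.
Arguments cartinv {S C} D {X Y Z} f.
Arguments times1 {S C X} Y {W} g.
Arguments phi {S C} D {X Y W} g.
Arguments lammap {S C} D {X Y Z} f.

Record ccnatsys (S : Type) (C : sccc S) := CCNatSys {
  ccnat :> cartnatsys C;
  cartcl : forall X Y Z (f : mor C (BProd X Y) Z), bijective (lammap ccnat f)
}.

Section Trivial.
Variables (S : Type) (C : sccc S) (D : ccnatsys C).

Definition rhom (X Y : bimag S) := {f : mor C X Y & ns D f}.
Definition mkr X Y (f : mor C X Y) (x : ns D f) : rhom X Y := existT _ f x.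

Definition rid X : rhom X X := mkr (0 : ns D (idm C X)).
Definition rcomp X Y Z (g : rhom Y Z) (f : rhom X Y) : rhom X Z :=
  @mkr X Z (comp (projT1 g) (projT1 f))
    (pushf D (projT1 g) (projT2 f) + pullf D (projT1 f) (projT2 g)).
Definition rbang X : rhom X BOne := mkr (0 : ns D (bang C X)).
Definition rpr1 X Y : rhom (BProd X Y) X := mkr (0 : ns D (pr1 C X Y)).
Definition rpr2 X Y : rhom (BProd X Y) Y := mkr (0 : ns D (pr2 C X Y)).
Definition rev Y Z : rhom (BProd (BExp Z Y) Y) Z := mkr (0 : ns D (ev C Y Z)).
Definition rpair X Y Z (f : rhom X Y) (g : rhom X Z) : rhom X (BProd Y Z) :=
  @mkr X (BProd Y Z) (pair (projT1 f) (projT1 g))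
    (cartinv D (pair (projT1 f) (projT1 g))
       (tr D (esym (pr1_pair (projT1 f) (projT1 g))) (projT2 f),
        tr D (esym (pr2_pair (projT1 f) (projT1 g))) (projT2 g))).
Definition rcurry X Y Z (f : rhom (BProd X Y) Z) : rhom X (BExp Z Y) :=
  @mkr X (BExp Z Y) (curry (projT1 f)) (inv_bij (cartcl D (projT1 f)) (projT2 f)).

Fixpoint rinterp (X Y : bimag S) (t : cterm X Y) : rhom X Y :=
  match t in cterm X Y return rhom X Y with
  | tid X => rid X
  | tcomp _ _ _ g f => rcomp (rinterp g) (rinterp f)
  | tbang X => rbang X
  | tpr1 X Y => rpr1 X Y
  | tpr2 X Y => rpr2 X Y
  | tpair _ _ _ f g => rpair (rinterp f) (rinterp g)
  | tev Y Z => rev Y Z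
  | tcurry _ _ _ f => rcurry (rinterp f)
  end.

(* Der^{CCC_S}(C; D): functors s : C -> D >< C (identity on objects, as
   forced by s o iota = tilde-iota) with p s = id and s o iota = tilde-iota. *)
Record der := Der {
  dsec : forall X Y, mor C X Y -> rhom X Y;
  dsec_p : forall X Y (f : mor C X Y), projT1 (dsec f) = f;
  dsec_id : forall X, dsec (idm C X) = rid X;
  dsec_comp : forall X Y Z (g : mor C Y Z) (f : mor C X Y),
      dsec (comp g f) = rcomp (dsec g) (dsec f);
  dsec_iota : forall X Y (t : cterm X Y), dsec (interp C t) = rinterp t
}.

(* the component of s at f, as an element of D_f; the abelian group
   structure of Der is fibrewise addition of these components *)
Definition fib (s : der) X Y (f : mor C X Y) : ns D f :=
  tr D (dsec_p s f) (projT2 (dsec s f)).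

Definition is_derivation (d : forall X Y (f : mor C X Y), ns D f) : Prop :=
  [/\ (forall X Y Z (f : mor C Y Z) (g : mor C X Y),
         d X Z (comp f g) = pushf D f (d X Y g) + pullf D g (d Y Z f)),
      (forall X Y, d _ _ (pr1 C X Y) = 0),
      (forall X Y, d _ _ (pr2 C X Y) = 0) &
      (forall Y Z, d _ _ (ev C Y Z) = 0)].

Definition derset := {d : forall X Y (f : mor C X Y), ns D f | is_derivation d}.

End Trivial.

From mathcomp Require Import all_boot all_algebra.
From Stdlib Require Import ProofIrrelevance FunctionalExtensionality ClassicalEpsilon.
Set Implicit Arguments.
Unset Strict Implicit.
Unset Printing Implicit Defensive.
Import GRing.Theory.
Local Open Scope ring_scope.

(* A section s of p : D >< C -> C is the same as a family of components
   d f in D_f, and functoriality of s is exactly the Leibniz rule for d.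
   It remains to see that s commutes with iota as soon as d kills the
   projections and evaluations: d 1 = 0 by Leibniz (d 1 = 2 d 1), d ! = 0
   because D_! is trivial, and on pairings and curried maps the cartesian
   and cartesian closed isomorphisms of D force d to take the values that
   define pairing and currying in D >< C.  Both group structures are
   fibrewise addition, so the bijection is additive by construction. *)

Section NaturalSystems.
Variables (S : Type) (C : sccc S) (D : natsys C).

Lemma nsmap0 X Y X' Y' (f : mor C X Y) (g : mor C X' Y')
    (a : mor C X' X) (b : mor C Y Y') (e : comp b (comp f a) = g) :
  nsmap D e 0 = 0.
Proof. by have := @nsmapB _ _ D _ _ _ _ _ _ _ _ e 0 0; rewrite !subrr. Qed.

Lemma tr_dep (d : forall X Y (f : mor C X Y), ns D f) X Y (f g : mor C X Y)
    (e : f = g) :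
  tr D e (d X Y f) = d X Y g.
Proof. by case: g / e; rewrite /tr nsmap1. Qed.

Lemma tr0 X Y (f g : mor C X Y) (e : f = g) : tr D e 0 = 0.
Proof. exact: nsmap0. Qed.

Lemma pushf_idm X Y (f : mor C X Y) (x : ns D f) :
  pushf D (idm C Y) x = tr D (esym (comp_idl f)) x.
Proof. by rewrite /pushf /tr; congr nsmap; apply: proof_irrelevance. Qed.

Lemma pullf_idm X Y (f : mor C X Y) (x : ns D f) :
  pullf D (idm C X) x = tr D (esym (comp_idr f)) x.
Proof. by rewrite /pullf /tr; congr nsmap; apply: proof_irrelevance. Qed.

End NaturalSystems.

Lemma inv_bijK (A B : Type) (h : A -> B) (H : bijective h) :
  cancel h (inv_bij H).
Proof. by rewrite /inv_bij; case: constructive_indefinite_description => g []. Qed.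

Section CartesianNaturalSystems.
Variables (S : Type) (C : sccc S) (D : cartnatsys C).

Lemma ns_terminal_eq X (f : mor C X BOne) (x y : ns D f) : x = y.
Proof. by case: (cart0 D f) => g K _; rewrite -(K x) -(K y). Qed.

Lemma cartmapK X Y Z (f : mor C X (BProd Y Z)) (x : ns D f) :
  cartinv D f (cartmap D f x) = x.
Proof. exact: inv_bijK. Qed.

End CartesianNaturalSystems.

Section Derivations.
Variables (S : Type) (C : sccc S) (D : ccnatsys C).
Variable d : forall X Y (f : mor C X Y), ns D f.
Hypothesis d_der : is_derivation d.

Lemma d_comp X Y Z (f : mor C Y Z) (g : mor C X Y) :
  d (comp f g) = pushf D f (d g) + pullf D g (d f).
Proof. by case: d_der. Qed.

Lemma d_pr1 X Y : d (pr1 C X Y) = 0. Proof. by case: d_der. Qed.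
Lemma d_pr2 X Y : d (pr2 C X Y) = 0. Proof. by case: d_der. Qed.
Lemma d_ev Y Z : d (ev C Y Z) = 0. Proof. by case: d_der. Qed.

Lemma d_comp_zerol X Y Z (f : mor C Y Z) (g : mor C X Y) :
  d f = 0 -> d (comp f g) = pushf D f (d g).
Proof. by move=> df0; rewrite d_comp df0 /pullf nsmap0 addr0. Qed.

Lemma d_comp_zeror X Y Z (f : mor C Y Z) (g : mor C X Y) :
  d g = 0 -> d (comp f g) = pullf D g (d f).
Proof. by move=> dg0; rewrite d_comp dg0 /pushf nsmap0 add0r. Qed.

Lemma d_idm X : d (idm C X) = 0.
Proof.
set i := idm C X.
have dii2 : d (comp i i) = d (comp i i) + d (comp i i).
  by rewrite {1}d_comp pushf_idm pullf_idm !tr_dep.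
have dii0 : d (comp i i) = 0 by apply: (@addrI _ (d (comp i i))); rewrite addr0 -dii2.
by rewrite -(tr_dep d (comp_idl i)) dii0 tr0.
Qed.

Lemma d_bang X : d (bang C X) = 0.
Proof. exact: ns_terminal_eq. Qed.

Lemma d_pair X Y Z (a : mor C X Y) (b : mor C X Z) :
  d (pair a b) = cartinv D (pair a b)
    (tr D (esym (pr1_pair a b)) (d a), tr D (esym (pr2_pair a b)) (d b)).
Proof.
rewrite -[d (pair a b)]cartmapK !tr_dep /cartmap.
by rewrite (d_comp_zerol _ (d_pr1 _ _)) (d_comp_zerol _ (d_pr2 _ _)).
Qed.

Lemma d_times1 X Y W (g : mor C X W) :
  d (times1 Y g) = phi D g (d g) 0.
Proof.
by rewrite /times1 d_pair /phi (d_comp_zeror _ (d_pr1 _ _)) d_pr2.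
Qed.

Lemma lammap_d X Y Z (f : mor C (BProd X Y) Z) :
  lammap D f (d (curry f)) = d f.
Proof. by rewrite /lammap -d_times1 -(d_comp_zerol _ (d_ev _ _)) tr_dep. Qed.

Lemma d_curry X Y Z (f : mor C (BProd X Y) Z) :
  d (curry f) = inv_bij (cartcl D f) (d f).
Proof. by rewrite -lammap_d inv_bijK. Qed.

Definition dsec_of_derivation X Y (f : mor C X Y) : rhom D X Y := mkr (d f).

Lemma dsec_of_derivation_idm X :
  dsec_of_derivation (idm C X) = rid D X.
Proof. by rewrite /dsec_of_derivation d_idm. Qed.

Lemma dsec_of_derivation_comp X Y Z (g : mor C Y Z) (f : mor C X Y) :
  dsec_of_derivation (comp g f)
  = rcomp (dsec_of_derivation g) (dsec_of_derivation f).
Proof. by rewrite /dsec_of_derivation /rcomp d_comp. Qed.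

Lemma dsec_of_derivation_iota X Y (t : cterm X Y) :
  dsec_of_derivation (interp C t) = rinterp D t.
Proof.
rewrite /dsec_of_derivation; elim: t => //=.
- by move=> ?; rewrite d_idm.
- by move=> ? ? ? g <- f <-; rewrite d_comp.
- by move=> ?; rewrite d_bang.
- by move=> ? ?; rewrite d_pr1.
- by move=> ? ?; rewrite d_pr2.
- by move=> ? ? ? f <- g <-; rewrite /rpair /= d_pair.
- by move=> ? ?; rewrite d_ev.
- by move=> ? ? ? f <-; rewrite /rcurry /= d_curry.
Qed.

Definition der_of_derivation : der D :=
  @Der _ _ D dsec_of_derivation (fun X Y f => erefl)
    dsec_of_derivation_idm dsec_of_derivation_comp dsec_of_derivation_iota.

End Derivations.

Section DerivationsOfSections.
Variables (S : Type) (C : sccc S) (D : ccnatsys C).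

Lemma dsecE (s : der D) X Y (f : mor C X Y) : dsec s f = mkr (fib s f).
Proof.
rewrite /fib; case: (dsec s f) (dsec_p s f) => f' x /= e.
by case: f / e; rewrite /tr nsmap1.
Qed.

Lemma fib_derivation (s : der D) : is_derivation (fun X Y f => fib s f).
Proof.
have fibE X Y (f : mor C X Y) x : dsec s f = mkr x -> fib s f = x.
  by rewrite dsecE; apply: inj_pair2.
split=> *; apply: fibE.
- by rewrite dsec_comp !dsecE.
- exact: (dsec_iota s (tpr1 _ _)).
- exact: (dsec_iota s (tpr2 _ _)).
- exact: (dsec_iota s (tev _ _)).
Qed.

Definition derivation_of_der (s : der D) : derset D := exist _ _ (fib_derivation s).

Definition der_of_derset (d : derset D) : der D := der_of_derivation (proj2_sig d).

Lemma der_eq (s1 s2 : der D) :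
  (forall X Y (f : mor C X Y), fib s1 f = fib s2 f) -> s1 = s2.
Proof.
move=> fib12; have dsec12 : @dsec _ _ _ s1 = @dsec _ _ _ s2.
  do 3!apply: functional_extensionality_dep => ?.
  by rewrite !dsecE fib12.
case: s1 s2 dsec12 {fib12} => [d1 ? ? ? ?] [d2 ? ? ? ?] /= d12.
by subst d2; congr Der; apply: proof_irrelevance.
Qed.

Lemma fib_der_of_derivation (d : derset D) X Y (f : mor C X Y) :
  fib (der_of_derset d) f = proj1_sig d X Y f.
Proof. exact: tr_dep. Qed.

Lemma derivation_of_derK :
  cancel derivation_of_der der_of_derset.
Proof. by move=> s; apply: der_eq => X Y f; rewrite fib_der_of_derivation. Qed.

Lemma der_of_derivationK :
  cancel der_of_derset derivation_of_der.
Proof.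
move=> [d d_der]; apply: subset_eq_compat.
do 3!apply: functional_extensionality_dep => ?.
exact: (fib_der_of_derivation (exist _ d d_der)).
Qed.

End DerivationsOfSections.

Theorem mainTheorem4 (S : Type) (C : sccc S) (D : ccnatsys C) :
  exists Phi : der D -> derset D,
    bijective Phi /\
    (forall s1 s2 s3 : der D,
        (forall X Y (f : mor C X Y), fib s3 f = fib s1 f + fib s2 f) <->
        (forall X Y (f : mor C X Y),
            proj1_sig (Phi s3) X Y f
            = proj1_sig (Phi s1) X Y f + proj1_sig (Phi s2) X Y f)).
Proof.
exists (@derivation_of_der S C D); split; last by [].
exact: Bijective (@derivation_of_derK S C D) (@der_of_derivationK S C D).
Qed.
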